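(* For every twin-free forest $F$ of order $n \ge 2$, we have $i_{\max}(F) \ge f(n-1)$.
   Context: $i_{\max}(F)$ denotes the number of maximal independent sets of $F$. A graph is twin-free if no two vertices have the same open neighbourhood. The function $f$ is defined by $f(1)=1$, $f(2)=f(3)=2$, and for $n\ge 4$: $f(n)=4\cdot 3^{n/5-1}$ if $n\equiv 0 \pmod 5$; $5\cdot 3^{(n-6)/5}$ if $n\equiv 1$; $2\cdot 3^{(n-2)/5}$ if $n\equiv 2$; $8\cdot 3^{(n-8)/5}$ if $n\equiv 3$; $3^{(n+1)/5}$ if $n\equiv 4 \pmod 5$. *)

From mathcomp Require Import all_boot.
Set Implicit Arguments. Unset Strict Implicit. Unset Printing Implicit Defensive.

(* A simple graph on a finite vertex type T is a symmetric irreflexive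
   relation e : rel T. *)

Definition acyclic (T : finType) (e : rel T) : Prop :=
  forall s : seq T, uniq s -> 3 <= size s -> ~~ cycle e s.

Definition is_forest (T : finType) (e : rel T) : Prop :=
  symmetric e /\ irreflexive e /\ acyclic e.

Definition nbhd (T : finType) (e : rel T) (x : T) : {set T} := [set y | e x y].

Definition twin_free (T : finType) (e : rel T) : Prop :=
  forall x y : T, x != y -> nbhd e x != nbhd e y.

Definition independent (T : finType) (e : rel T) (S : {set T}) : bool :=
  [forall x in S, forall y in S, ~~ e x y].

Definition imax (T : finType) (e : rel T) : nat :=
  #|[set S : {set T} | maxset (independent e) S]|.

(* The function f of the paper (f 0 is irrelevant, set to 0). *)
Definition f (n : nat) : nat :=
  match n with
  | 0 => 0
  | 1 => 1
  | 2 => 2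
  | 3 => 2
  | _ =>
    match n %% 5 with
    | 0 => 4 * 3 ^ (n %/ 5 - 1)
    | 1 => 5 * 3 ^ ((n - 6) %/ 5)
    | 2 => 2 * 3 ^ ((n - 2) %/ 5)
    | 3 => 8 * 3 ^ ((n - 8) %/ 5)
    | _ => 3 ^ ((n + 1) %/ 5)
    end
  end.

Example f_check : [seq f n | n <- iota 1 12] = [:: 1; 2; 2; 3; 4; 5; 6; 8; 9; 12; 15; 18].
Proof. by []. Qed.

From mathcomp Require Import all_boot zify.
Set Implicit Arguments. Unset Strict Implicit. Unset Printing Implicit Defensive.

(* For a vertex set [V] of the forest let [nnbhd V] be the number of distinct
   nonempty neighbourhoods in the induced subforest F[V]; it is at least n - 1
   when F is twin-free.  We show imax(F[V]) >= g (nnbhd V) by strong induction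
   on |V|.  Deleting one of two twins, or an isolated vertex, leaves imax
   unchanged and does not decrease [nnbhd].  Otherwise F[V] is twin-free
   without isolated vertices; let u v w p ... be a longest path.  Maximality
   and twin-freeness force N(u) = {v}, N(v) = {u, w}, and every other neighbour
   of w is a leaf or carries a single pendant leaf.  Every maximal independent
   set contains exactly one of u and v, so
   imax(V) = imax(V - N[u]) + imax(V - N[v]).  Deleting a set R from V gives
   |V| <= nnbhd (V - R) + |R| + |B|, where B collects the vertices next to R
   whose neighbourhoods may collapse; bounding B in each configuration around w
   reduces the induction step to one of the inequalities
   g n <= g (n-2) + g (n-4), g n <= 2 g (n-3), g n <= g (n-2) + 2 g (n-7), ...
   which hold because g grows by the factor 3 every 5 steps. *)

(** * The lower bound g *)

(* [f] with its values at 0, 1 and 3 raised just enough for the recursive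
   inequalities below to hold for every [n]. *)
Definition g (n : nat) : nat :=
  match n with 0 => 1 | 1 => 2 | 3 => 3 | _ => f n end.

Lemma f_le_g n : f n <= g n.
Proof. by case: n => [|[|[|[|n]]]]. Qed.

Lemma fD5 n : 4 <= n -> f (n + 5) = 3 * f n.
Proof.
case: n => [|[|[|[|m]]]] // _; rewrite (_ : m.+4 + 5 = m.+4.+4.+1) /f; last by rewrite addnC.
have -> : m.+4.+4.+1 %% 5 = m.+4 %% 5 by lia.
have : m.+4 %% 5 < 5 by rewrite ltn_mod.
case Er: (m.+4 %% 5) => [|[|[|[|[|r]]]]] // _.
all: rewrite ?[3 * (_ * _)]mulnCA -expnS; first [congr (_ * 3 ^ _) | congr (3 ^ _)]; lia.
Qed.

Lemma gD5 n : 4 <= n -> g (n + 5) = 3 * g n.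
Proof. by case: n => [|[|[|[|m]]]] // n4; rewrite -fD5. Qed.

Lemma g_shift k n : 16 <= n -> k <= 7 -> g (n - k) = 3 * g (n - 5 - k).
Proof. by move=> n16 k7; rewrite -gD5; [congr g | ]; lia. Qed.
Arguments g_shift k {n}.

Lemma nat_ind_step5 (P : nat -> Prop) :
  (forall n, n < 16 -> P n) -> (forall n, 16 <= n -> P (n - 5) -> P n) ->
  forall n, P n.
Proof.
move=> Psmall Pstep n; elim: n {-2}n (leqnn n) => [|m IHm] n le_nm.
  by apply: Psmall; lia.
by case: (ltnP n 16) => [/Psmall // | n16]; apply: Pstep => //; apply: IHm; lia.
Qed.

Lemma g_leS n : g n <= g n.+1.
Proof.
elim/nat_ind_step5: n => [n|n n16 IH]; first by do 16! case: n => [//|n].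
have := g_shift 0 n16 isT; have := g_shift 0 (leqW n16) isT.
rewrite !subn0 (_ : n.+1 - 5 = (n - 5).+1); lia.
Qed.

Lemma g_mono : {homo g : m n / m <= n}.
Proof. by apply: homo_leq => //; [exact: leq_trans | exact: g_leS]. Qed.

Lemma g_le_double_sub2 n : g n <= 2 * g (n - 2).
Proof.
elim/nat_ind_step5: n => [n|n n16 IH]; first by do 16! case: n => [//|n].
have := g_shift 0 n16 isT; have := g_shift 2 n16 isT; rewrite !subn0; lia.
Qed.

Lemma g_le_sub2_sub4 n : g n <= g (n - 2) + g (n - 4).
Proof.
elim/nat_ind_step5: n => [n|n n16 IH]; first by do 16! case: n => [//|n].
have := g_shift 0 n16 isT; have := g_shift 2 n16 isT; have := g_shift 4 n16 isT.
rewrite !subn0; lia.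
Qed.

Lemma g_le_double_sub3 n : 4 <= n -> g n <= 2 * g (n - 3).
Proof.
elim/nat_ind_step5: n => [n|n n16 IH _]; first by do 16! case: n => [//|n].
have {IH} := IH ltac:(lia).
have := g_shift 0 n16 isT; have := g_shift 3 n16 isT; rewrite !subn0; lia.
Qed.

Lemma g_le_double_sub5 n : g n <= 2 * g (n - 5) + g (maxn (n - 5) 2).
Proof.
elim/nat_ind_step5: n => [n|n n16 IH]; first by do 16! case: n => [//|n].
rewrite (_ : maxn (n - 5) 2 = n - 5); last by lia.
move: IH; rewrite (_ : maxn (n - 5 - 5) 2 = n - 5 - 5); last by lia.
have := g_shift 0 n16 isT; have := g_shift 5 n16 isT; rewrite !subn0; lia.
Qed.

Lemma g_le_sub2_double_sub7 n : g n <= g (n - 2) + 2 * g (n - 7).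
Proof.
elim/nat_ind_step5: n => [n|n n16 IH]; first by do 16! case: n => [//|n].
have := g_shift 0 n16 isT; have := g_shift 2 n16 isT; have := g_shift 7 n16 isT.
rewrite !subn0; lia.
Qed.

(** * Maximal independent sets of induced subforests *)

Lemma setD1_notin (T : finType) (A : {set T}) x : x \notin A -> A :\ x = A.
Proof. by move=> xA; apply/setDidPl; rewrite disjoint_sym disjoints1. Qed.

Lemma eq_set1_or_other (T : finType) (A : {set T}) a : a \in A ->
  A = [set a] \/ exists2 c, c \in A & c != a.
Proof.
move=> aA; case: (boolP (A \subset [set a])) => [sub | /subsetPn[c cA /set1P/eqP ca]].
  by left; apply/eqP; rewrite eqEsubset sub sub1set aA.
by right; exists c.
Qed.

Section InducedSubforest.
Variables (T : finType) (e : rel T).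
Hypotheses (e_sym : symmetric e) (e_irr : irreflexive e).
Implicit Types (A B R S V W : {set T}) (x y : T).

Definition N V x := [set y in V | e x y].

Definition mis V S :=
  [&& S \subset V, independent e S & [forall x in V, (x \in S) || [exists y in S, e x y]]].

Definition imax_in V := #|[set S | mis V S]|.

Lemma inN V x y : (y \in N V x) = (y \in V) && e x y.
Proof. by rewrite inE. Qed.

Lemma N_sub V x : {subset N V x <= V}.
Proof. by move=> y; rewrite inN => /andP[]. Qed.

Lemma N_adj V x y : y \in N V x -> e x y.
Proof. by rewrite inN => /andP[]. Qed.

Lemma N_sym V x y : x \in V -> y \in V -> (x \in N V y) = (y \in N V x).
Proof. by move=> xV yV; rewrite !inN xV yV e_sym. Qed.

Lemma independentP S :
  reflect (forall x y, x \in S -> y \in S -> ~~ e x y) (independent e S).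
Proof.
apply: (iffP forallP) => [indS x y xS yS | indS x].
  by move: (indS x); rewrite xS => /forallP /(_ y); rewrite yS.
by apply/implyP => xS; apply/forallP => y; apply/implyP; exact: indS.
Qed.

Lemma misP V S : reflect
  [/\ S \subset V, (forall x y, x \in S -> y \in S -> ~~ e x y) &
      (forall x, x \in V -> x \notin S -> exists2 y, y \in S & e x y)] (mis V S).
Proof.
apply: (iffP and3P) => [[SV /independentP indS /forallP domS] | [SV indS domS]].
  split=> // x xV xS; move: (domS x); rewrite xV (negbTE xS) /=.
  by case/existsP => y /andP[yS exy]; exists y.
split=> //; first exact/independentP.
apply/forallP => x; apply/implyP => xV; case xS: (x \in S) => //=.
by have [y yS exy] := domS x xV (negbT xS); apply/existsP; exists y; rewrite yS.
Qed.

Lemma independentU1 S x : (forall y, y \in S -> ~~ e x y) ->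
  (forall y z, y \in S -> z \in S -> ~~ e y z) ->
  forall y z, y \in x |: S -> z \in x |: S -> ~~ e y z.
Proof.
move=> xS indS y z; rewrite !inE => /predU1P[-> | yS] /predU1P[-> | zS].
- by rewrite e_irr.
- exact: xS.
- by rewrite e_sym xS.
- exact: indS.
Qed.

Lemma mis_setD_closed_nbhd V S x : x \in S -> mis V S ->
  mis (V :\: (x |: N V x)) (S :\ x).
Proof.
move=> xS /misP[SV indS domS]; apply/misP; split.
- apply/subsetP => y /setD1P[yx yS]; have yV := subsetP SV _ yS.
  by rewrite !inE yV (negbTE yx) (negbTE (indS _ _ xS yS)).
- by move=> y z /setD1P[_ yS] /setD1P[_ zS]; apply: indS.
move=> z; rewrite !inE negb_or => /andP[/andP[zx zN] zV]; rewrite (negbTE zx) /= => zS.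
have [y yS ezy] := domS z zV zS; exists y => //; rewrite !inE yS andbT.
by apply: contraNneq zN => yx; rewrite zV -yx e_sym.
Qed.

Lemma mis_setU1 V S x : x \in V -> mis (V :\: (x |: N V x)) S -> mis V (x |: S).
Proof.
move=> xV /misP[SV indS domS].
have S_far y : y \in S -> y \in V /\ ~~ e x y.
  move/(subsetP SV); rewrite !inE negb_or => /andP[/andP[_ yN] yV].
  by rewrite yV /= in yN.
apply/misP; split.
- by apply/subsetP => y /setU1P[-> // | /S_far[]].
- by apply: independentU1 => // y /S_far[].
move=> z zV; rewrite !inE negb_or => /andP[zx zS].
case: (boolP (z \in N V x)) => [| zN].
  by rewrite inN e_sym => /andP[_ exz]; exists x; rewrite ?setU11.
have zV' : z \in V :\: (x |: N V x) by rewrite in_setD in_setU1 negb_or zx zN zV.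
by have [y yS ezy] := domS z zV' zS; exists y; rewrite // in_setU1 yS orbT.
Qed.

Lemma card_mis_mem V x : x \in V ->
  #|[set S | mis V S & x \in S]| = imax_in (V :\: (x |: N V x)).
Proof.
move=> xV; set V' := V :\: (x |: N V x).
have xV' : x \notin V' by rewrite !inE eqxx.
have notin_mis S : mis V' S -> x \notin S.
  by case/misP => SV _ _; apply: contra xV'; apply: (subsetP SV).
have -> : [set S | mis V S & x \in S] = (fun S => x |: S) @: [set S | mis V' S].
  apply/setP => S; rewrite inE; apply/andP/imsetP => [[misS xS] | [S' ]].
    by exists (S :\ x); rewrite ?setD1K // inE mis_setD_closed_nbhd.
  by rewrite inE => misS' ->; rewrite setU11 mis_setU1.
rewrite card_in_imset // => A B; rewrite !inE => /notin_mis xA /notin_mis xB eAB.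
by rewrite -(setU1K xA) -(setU1K xB) eAB.
Qed.

Lemma imax_in_leaf V u v : u \in V -> N V u = [set v] ->
  imax_in V = imax_in (V :\: (u |: N V u)) + imax_in (V :\: (v |: N V v)).
Proof.
move=> uV Nu; have /[!inN] /andP[vV euv] : v \in N V u by rewrite Nu set11.
rewrite -!card_mis_mem // -cardsUI.
have -> : [set S | mis V S & u \in S] :&: [set S | mis V S & v \in S] = set0.
  apply/setP => S; rewrite !inE andbACA andbb.
  by apply/negP => /andP[/misP[_ indS _] /andP[uS vS]]; move: (indS _ _ uS vS); rewrite euv.
rewrite cards0 addn0; apply: eq_card => S; rewrite !inE -andb_orr.
case misS: (mis V S) => //=; case uS: (u \in S) => //=.
have /misP[SV _ domS] := misS; have [y yS euy] := domS u uV (negbT uS).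
suff <- : y = v by [].
by apply/set1P; rewrite -Nu inN (subsetP SV).
Qed.

Lemma imax_in_isolated V z : z \in V -> N V z = set0 -> imax_in V = imax_in (V :\ z).
Proof.
move=> zV Nz; have -> : V :\ z = V :\: (z |: N V z) by rewrite Nz setU0.
rewrite -card_mis_mem //.
apply: eq_card => S; rewrite !inE; case misS: (mis V S) => //=.
apply/esym/negPn/negP => zS; have /misP[SV _ domS] := misS.
have [y yS ezy] := domS z zV zS.
have : y \in N V z by rewrite inN (subsetP SV _ yS) ezy.
by rewrite Nz inE.
Qed.

Section Twins.
Variables (V : {set T}) (x y : T).
Hypotheses (xV : x \in V) (yV : y \in V) (xy : x != y) (Nxy : N V x = N V y).

Lemma twin_adj z : z \in V -> e x z = e y z.
Proof. by move=> zV; move/setP: Nxy => /(_ z); rewrite !inN zV. Qed.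

Lemma mis_twin_mem S : mis V S -> (x \in S) = (y \in S).
Proof.
case/misP => SV indS domS.
suff mem_twin a b : N V a = N V b -> b \in V -> a \in S -> b \in S.
  by apply/idP/idP; apply: mem_twin.
move=> Nab bV aS; apply/negPn/negP => bS; have [z zS ebz] := domS b bV bS.
have /[!inN] /andP[_ eaz] : z \in N V a by rewrite Nab inN (subsetP SV).
by move: (indS _ _ aS zS); rewrite eaz.
Qed.

Lemma mis_twin_setD1 S : mis V S -> mis (V :\ x) (S :\ x).
Proof.
move=> misS; have /misP[SV indS domS] := misS; apply/misP; split.
- exact: setSD.
- by move=> a b /setD1P[_ aS] /setD1P[_ bS]; apply: indS.
move=> z /setD1P[zx zV] zS; have {}zS : z \notin S by rewrite !inE zx in zS.
have [t tS ezt] := domS z zV zS.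
have [tx | tx] := eqVneq t x; last by exists t; rewrite // !inE tx.
exists y; first by rewrite !inE eq_sym xy -(mis_twin_mem misS) -tx.
by rewrite e_sym -twin_adj // e_sym -tx.
Qed.

Definition twin_lift S := if y \in S then x |: S else S.

Lemma mis_twin_lift S : mis (V :\ x) S -> mis V (twin_lift S).
Proof.
case/misP => SV indS domS.
have SV' : S \subset V by apply: subset_trans SV (subsetDl _ _).
have domS' z : z \in V -> z != x -> z \notin S -> exists2 t, t \in S & e z t.
  by move=> zV zx; apply: domS; rewrite !inE zx.
rewrite /twin_lift; case: ifP => yS; apply/misP; split => //.
- by rewrite subUset sub1set xV.
- apply: independentU1 => // t tS.
  by rewrite twin_adj ?(subsetP SV') // indS.
- move=> z zV; rewrite !inE negb_or => /andP[zx zS].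
  by have [t tS ezt] := domS' z zV zx zS; exists t; rewrite // !inE tS orbT.
move=> z zV zS; have [-> | zx] := eqVneq z x; last exact: domS'.
have yx : y != x by rewrite eq_sym.
have [t tS eyt] := domS' y yV yx (negbT yS).
by exists t; rewrite // twin_adj // (subsetP SV').
Qed.

Lemma imax_in_twin : imax_in V = imax_in (V :\ x).
Proof.
have notin_mis S : mis (V :\ x) S -> x \notin S.
  by case/misP => SV _ _; apply/negP => /(subsetP SV); rewrite !inE eqxx.
rewrite /imax_in; have -> : [set S | mis V S] = twin_lift @: [set S | mis (V :\ x) S].
  apply/setP => S; rewrite inE; apply/idP/imsetP => [misS | [S' ]].
    exists (S :\ x); first by rewrite inE mis_twin_setD1.
    rewrite /twin_lift !inE eq_sym xy /= -(mis_twin_mem misS).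
    by case: ifP => [/setD1K | /negbT/setD1_notin] ->.
  by rewrite inE => /mis_twin_lift /[swap] ->.
rewrite card_in_imset // => A B /[!inE] /notin_mis xA /notin_mis xB.
rewrite /twin_lift; case: ifP; case: ifP => // _ _ /(congr1 (fun S => S :\ x)).
- by rewrite !setU1K.
- by move=> AB; rewrite -(setU1K xA) AB setD1_notin.
- by move=> AB; rewrite -(setU1K xB) -AB setD1_notin.
Qed.

End Twins.

Definition twin_free_in V := {in V &, injective (N V)}.
Definition no_isolated_in V := {in V, forall x, N V x != set0}.

(** * Longest paths *)

Hypothesis e_acyc : acyclic e.

Definition spath V p :=
  [&& uniq p, all [in V] p & if p is x :: q then path e x q else true].

Definition longest_spath V p := spath V p /\ forall q, spath V q -> size q <= size p.

Lemma spath_size V p : spath V p -> size p <= #|V|.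
Proof.
case/and3P => Up /allP pV _; rewrite -(card_uniqP Up).
by apply/subset_leq_card/subsetP => x /pV.
Qed.

Lemma exists_longest_spath V : exists p, longest_spath V p.
Proof.
pose P n := [exists p : n.-tuple T, spath V p].
have P0 : exists n, P n by exists 0; apply/existsP; exists [tuple].
have P_le n : P n -> n <= #|V| by case/existsP => p /spath_size; rewrite size_tuple.
have [m] := ex_maxnP P0 P_le; case/existsP => p pV max_m; exists p; split=> // q qV.
by rewrite size_tuple; apply: max_m; apply/existsP; exists (in_tuple q).
Qed.

Lemma longest_spath_rev V p : longest_spath V p -> longest_spath V (rev p).
Proof.
case=> /and3P[Up pV ep] max_p; split; last by rewrite size_rev.
rewrite /spath rev_uniq all_rev Up pV; case: p ep {Up pV max_p} => // x q ep.
rewrite lastI rev_rcons /= rev_path.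
by rewrite (eq_path (e' := e)) // => a b; rewrite e_sym.
Qed.

Lemma spath_behead V x q : spath V (x :: q) -> spath V q.
Proof.
case/and3P => /= /andP[_ Uq] /andP[_ qV] eq; rewrite /spath Uq qV.
by case: q eq {Uq qV} => //= y q /andP[].
Qed.

Lemma longest_spath_eq_size V p q : longest_spath V p -> spath V q -> size q = size p -> longest_spath V q.
Proof. by case=> _ max_p qV eq_qp; split=> // r /max_p; rewrite eq_qp. Qed.

(* If [x] occurred further along the path, [x y ... x] would be a cycle. *)
Lemma spath_prepend V x y q : spath V (y :: q) -> x \in V -> e x y ->
  x = head y q \/ spath V [:: x, y & q].
Proof.
move=> yqV xV exy; case: (boolP (x \in y :: q)) => [xyq | xyq]; last first.
  by right; move: yqV; rewrite /spath [uniq (x :: _)]/= xyq [all _ (x :: _)]/= xV [path _ x _]/= exy.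
have [xy | xy] := eqVneq x y; first by rewrite xy e_irr in exy.
case: q yqV xyq => [|z q] yqV; first by rewrite inE (negbTE xy).
rewrite !inE (negbTE xy) /=; have [-> | xz /= xq] := eqVneq x z; first by left.
case/splitPr: xq yqV => q1 q2 /and3P[Up _ ep]; exfalso.
have U : uniq [:: y, z & rcons q1 x].
  by move: Up; rewrite -cat_rcons -!cat_cons cat_uniq => /and3P[].
have ep' : path e y (z :: rcons q1 x).
  by move: ep; rewrite -cat_rcons -cat_cons cat_path => /andP[].
have := e_acyc U; rewrite /= size_rcons => /(_ isT); apply/negP/negPn.
by move: ep' => /= /andP[-> ep']; rewrite rcons_path ep' last_rcons exy.
Qed.

Lemma longest_end V a b q : longest_spath V [:: a, b & q] -> N V a = [set b].
Proof.
move=> lp; have [abqV max_p] := lp; have /and3P[_ /= /and3P[aV bV _] /andP[eab _]] := abqV.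
apply/setP => x; rewrite inE inN; have [-> | xb] := eqVneq x b; first by rewrite bV eab.
apply/negbTE/andP => -[xV eax]; rewrite e_sym in eax.
case: (spath_prepend abqV xV eax) => [xb' | /max_p]; first by rewrite xb' eqxx in xb.
by rewrite /= ltnn.
Qed.

Lemma longest_second V a0 a1 a2 q : twin_free_in V ->
  longest_spath V [:: a0, a1, a2 & q] -> N V a1 = [set a0; a2].
Proof.
move=> twV lp; have [p_path _] := lp; have Na0 := longest_end lp.
have /and3P[_ /and4P[a0V _ a2V _] /and3P[ea01 ea12 _]] := p_path.
have a1p := spath_behead p_path.
apply/setP => b; rewrite !inE; have [-> | ba0] := eqVneq b a0; first by rewrite a0V e_sym ea01.
have [-> | ba2] := eqVneq b a2; first by rewrite a2V ea12.
apply/negbTE/andP => -[bV eab]; rewrite e_sym in eab.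
case: (spath_prepend a1p bV eab) => [/eqP | bp]; first by rewrite (negbTE ba2).
have /longest_end Nb : longest_spath V [:: b, a1, a2 & q] by apply: longest_spath_eq_size lp bp _.
by move/eqP: ba0; apply; apply: twV => //; rewrite Nb Na0.
Qed.

Lemma longest_third V a0 a1 a2 a3 q b : twin_free_in V ->
  longest_spath V [:: a0, a1, a2, a3 & q] -> b \in N V a2 -> b != a1 -> b != a3 ->
  N V b = [set a2] \/ exists c, N V b = [set a2; c] /\ N V c = [set b].
Proof.
move=> twV lp; have [p_path _] := lp.
have a2p := spath_behead (spath_behead p_path).
have /and3P[_ /and3P[a2V _ _] _] := a2p.
rewrite inN => /andP[bV eab] ba1 ba3; rewrite e_sym in eab.
case: (spath_prepend a2p bV eab) => [/eqP | bp]; first by rewrite (negbTE ba3).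
have leaf_c c : c \in N V b -> c != a2 -> N V c = [set b].
  rewrite inN => /andP[cV ebc] ca2; rewrite e_sym in ebc.
  case: (spath_prepend bp cV ebc) => [/eqP | cp]; first by rewrite (negbTE ca2).
  by apply: (@longest_end V c b [:: a2, a3 & q]); apply: longest_spath_eq_size lp cp _.
have a2Nb : a2 \in N V b by rewrite inN a2V eab.
have [Nb | [c cNb ca2]] := eq_set1_or_other a2Nb; first by left.
right; exists c; split; last exact: leaf_c.
apply/setP => d; rewrite in_set2; apply/idP/orP => [dNb | [] /eqP -> //].
have [-> | da2] := eqVneq d a2; [by left | right; apply/eqP].
by apply: twV; [exact: N_sub dNb | exact: N_sub cNb | rewrite (leaf_c d) ?(leaf_c c)].
Qed.

(** * Counting distinct neighbourhoods *)

Definition nnbhd V := #|[set N V x | x in V] :\ set0|.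

Lemma nnbhd_le_card V : nnbhd V <= #|V|.
Proof. by apply: leq_trans (leq_imset_card (N V) V); apply/subset_leq_card/subsetDl. Qed.

Lemma card_le_nnbhd V A : A \subset V -> {in A &, injective (N V)} ->
  {in A, forall x, N V x != set0} -> #|A| <= nnbhd V.
Proof.
move=> AV injN NA; rewrite -(card_in_imset injN); apply: subset_leq_card.
apply/subsetP => K /imsetP[x xA ->]; rewrite !inE NA //=.
by apply/imsetP; exists x => //; apply: (subsetP AV).
Qed.

Lemma N_setD V R x : N (V :\: R) x = N V x :\: R.
Proof. by apply/setP => y; rewrite !inE andbA. Qed.

Lemma N_setD_nonadj V R x : ~~ [exists r in R, e x r] -> N (V :\: R) x = N V x.
Proof.
move=> xR; rewrite N_setD; apply/setDidPl; rewrite disjoints_subset.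
apply/subsetP => y; rewrite !inE => /andP[_ exy]; apply: contra xR => yR.
by apply/existsP; exists y; rewrite yR.
Qed.

Definition nbhd_separated V R B x := N (V :\: R) x != set0 /\
  forall y, y \in V -> y \notin R -> y \notin B -> y != x -> N (V :\: R) y != N (V :\: R) x.

(* Deleting [R] can only merge the neighbourhoods of vertices adjacent to [R];
   those outside the exceptional set [B] are required to stay distinct. *)
Lemma card_le_nnbhd_setD V R B : twin_free_in V -> no_isolated_in V ->
  (forall x, x \in V -> x \notin R -> x \notin B -> [exists r in R, e x r] ->
     nbhd_separated V R B x) ->
  #|V| <= nnbhd (V :\: R) + #|R| + #|B|.
Proof.
move=> twV isoV sepR; set A := V :\: R :\: B.
have inA x : x \in A -> [/\ x \in V, x \notin R & x \notin B].
  by rewrite !inE => /andP[-> /andP[-> ->]].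
have cardA : #|A| <= nnbhd (V :\: R).
  apply: card_le_nnbhd; first by rewrite subsetDl.
    move=> x y xA yA Nxy; have [xV xR xB] := inA x xA; have [yV yR yB] := inA y yA.
    have [// | xy] := eqVneq x y; have yx : y != x by rewrite eq_sym.
    case: (boolP [exists r in R, e x r]) => [/(sepR x xV xR xB)[_ sep_x] | xR'].
      by case/negP: (sep_x y yV yR yB yx); rewrite Nxy.
    case: (boolP [exists r in R, e y r]) => [/(sepR y yV yR yB)[_ sep_y] | yR'].
      by case/negP: (sep_y x xV xR xB xy); rewrite Nxy.
    by apply: twV; rewrite // -(N_setD_nonadj V xR') -(N_setD_nonadj V yR').
  move=> x xA; have [xV xR xB] := inA x xA.
  case: (boolP [exists r in R, e x r]) => [/(sepR x xV xR xB)[] // | xR'].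
  by rewrite N_setD_nonadj // isoV.
have V_sub : V \subset A :|: R :|: B.
  by apply/subsetP => x xV; rewrite !inE xV; case: (x \in R); case: (x \in B).
apply: leq_trans (subset_leq_card V_sub) _.
apply: leq_trans (leq_card_setU _ _) _; rewrite leq_add2r.
by apply: leq_trans (leq_card_setU _ _) _; rewrite leq_add2r.
Qed.

Lemma nnbhd_isolated V z : N V z = set0 -> nnbhd V <= nnbhd (V :\ z).
Proof.
move=> Nz; apply/subset_leq_card/subsetP => K /setD1P[K0 /imsetP[a aV Ka]].
rewrite !inE K0 /=; apply/imsetP; exists a.
  by rewrite !inE aV andbT; apply: contra_neq K0 => az; rewrite Ka az Nz.
rewrite Ka N_setD; apply/esym/setDidPl; rewrite disjoint_sym disjoints1 inN.
by apply/negP => /andP[_ eaz]; have := in_set0 a; rewrite -Nz inN aV e_sym eaz.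
Qed.

Lemma nnbhd_twin V x y : x \in V -> y \in V -> x != y -> N V x = N V y ->
  nnbhd V <= nnbhd (V :\ x).
Proof.
move=> xV yV xy Nxy; have yx : y != x by rewrite eq_sym.
set C := [set N V a | a in V] :\ set0.
have twin_mem K : K \in C -> (x \in K) = (y \in K).
  by case/setD1P => _ /imsetP[a aV ->]; rewrite !inN xV yV /= ![e a _]e_sym (twin_adj Nxy).
have injC : {in C &, injective (fun K => K :\ x)}.
  move=> K1 K2 K1C K2C /setP K12; apply/setP => z; have [-> | zx] := eqVneq z x.
    by rewrite !twin_mem //; have := K12 y; rewrite !in_setD1 yx.
  by have := K12 z; rewrite !in_setD1 zx.
rewrite /nnbhd -/C -(card_in_imset injC); apply/subset_leq_card/subsetP.
move=> _ /imsetP[K KC ->]; have [K0 /imsetP[a aV Ka]] := setD1P KC.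
have [a' [a'V a'x Na']] : exists a', [/\ a' \in V, a' != x & N V a' = K].
  have [ax | ax] := eqVneq a x; last by exists a.
  by exists y; rewrite yx yV -Nxy -ax Ka.
rewrite in_setD1; apply/andP; split.
  case: (boolP (x \in K)) => xK; last by rewrite setD1_notin.
  by apply/set0Pn; exists y; rewrite in_setD1 yx -twin_mem.
by apply/imsetP; exists a'; rewrite ?N_setD ?Na' // !inE a'x.
Qed.

Lemma no_four_cycle x y a b : x != y -> a != b ->
  e x a -> e y a -> e x b -> e y b -> False.
Proof.
move=> xy ab exa eya exb eyb.
have neq_adj u w : e u w -> u != w by apply: contraTneq => ->; rewrite e_irr.
have U : uniq [:: x; a; y; b].
  by rewrite /= !inE !negb_or xy ab !neq_adj // e_sym.
by move/negP: (e_acyc U isT); apply; rewrite /= exa (e_sym a) eya eyb (e_sym b) exb.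
Qed.

Lemma separated_two V R B x a b : a \in N (V :\: R) x -> b \in N (V :\: R) x -> a != b ->
  nbhd_separated V R B x.
Proof.
move=> aN bN ab; split; first by apply/set0Pn; exists a.
move=> y _ _ _ yx; apply/eqP => Nyx.
move: (aN) (bN); rewrite -{1 2}Nyx !inN => /andP[_ eya] /andP[_ eyb].
move: aN bN; rewrite !inN => /andP[_ exa] /andP[_ exb].
exact: (no_four_cycle yx ab eya exa eyb exb).
Qed.

Lemma separated_leaf V R B x t : t \in N (V :\: R) x -> N V t = [set x] ->
  nbhd_separated V R B x.
Proof.
move=> tN Nt; split; first by apply/set0Pn; exists t.
move=> y yV _ _ yx; apply/eqP => Nyx; move: tN; rewrite -Nyx inN => /andP[_ eyt].
have : y \in N V t by rewrite inN yV e_sym.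
by rewrite Nt inE (negbTE yx).
Qed.

Lemma setD_ltn V R r : r \in V -> r \in R -> #|V :\: R| < #|V|.
Proof.
move=> rV rR; rewrite proper_card // properEneq subsetDl andbT.
by apply: contraTneq rV => <-; rewrite !inE rR.
Qed.

Lemma exists_adjU A B (y : T) : [exists r in A :|: B, e y r] ->
  [exists r in A, e y r] \/ [exists r in B, e y r].
Proof.
case/existsP => r /andP[/setUP[rA | rB] eyr]; [left | right];
  by apply/existsP; exists r; rewrite ?rA ?rB.
Qed.

Lemma exists_adj1 (a y : T) : [exists r in [set a], e y r] -> e y a.
Proof. by case/existsP => r /andP[/set1P <-]. Qed.

Lemma exists_adj2 (a b y : T) : [exists r in [set a; b], e y r] -> e y a \/ e y b.
Proof. by case/existsP => r /andP[/set2P[<- | <-]]; [left | right]. Qed.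

Lemma cards2_le (a b : T) : #|[set a; b]| <= 2.
Proof. by rewrite cards2; case: (a != b). Qed.

Lemma cards3_le (a b c : T) : #|a |: [set b; c]| <= 3.
Proof. by rewrite cardsU1 (leq_add (leq_b1 _) (cards2_le _ _)). Qed.

Lemma imax_in_setD_ge V R k r :
  (forall W, #|W| < #|V| -> g (nnbhd W) <= imax_in W) ->
  r \in V -> r \in R -> #|V| <= nnbhd (V :\: R) + k ->
  g (#|V| - k) <= imax_in (V :\: R).
Proof.
move=> IH rV rR le_V; apply: leq_trans (IH _ (setD_ltn rV rR)).
by apply: g_mono; rewrite leq_subLR addnC.
Qed.

(** * The end of a longest path *)

(* [u v w p] are the first four vertices of a longest path of F[V]; the
   hypotheses on [N V u], [N V v] and [Nw_branches] are what its maximality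
   yields (lemmas [longest_end], [longest_second], [longest_third]). *)
Section LongestPathEnd.

Variables (V : {set T}) (u v w p : T).
Hypotheses (twV : twin_free_in V) (isoV : no_isolated_in V).
Hypothesis IH : forall W : {set T}, #|W| < #|V| -> g (nnbhd W) <= imax_in W.
Hypotheses (uV : u \in V) (vV : v \in V) (wV : w \in V) (pV : p \in V).
Hypotheses (Nu : N V u = [set v]) (Nv : N V v = [set u; w]) (ewp : e w p).
Hypotheses (uw : u != w) (up : u != p) (vw : v != w) (vp : v != p) (wp : w != p).
Hypothesis Nw_branches : forall b, b \in N V w -> b != v -> b != p ->
  N V b = [set w] \/ exists c, N V b = [set w; c] /\ N V c = [set b].

Lemma nbr_u x : x \in V -> e x u -> x = v.
Proof. by move=> xV exu; apply/set1P; rewrite -Nu inN xV e_sym. Qed.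

Lemma nbr_v x : x \in V -> e x v -> x = u \/ x = w.
Proof. by move=> xV exv; apply/set2P; rewrite -Nv inN xV e_sym. Qed.

Lemma u_notin_Nw : u \notin N V w.
Proof. by apply/negP => /N_adj /(nbr_u wV) wv; move: vw; rewrite wv eqxx. Qed.

Lemma p_notin_Nu : p \notin N V u.
Proof. by rewrite Nu inE eq_sym vp. Qed.

Lemma p_notin_Nv : p \notin N V v.
Proof. by rewrite Nv !inE negb_or eq_sym up eq_sym wp. Qed.

Lemma p_in_Nw : p \in N V w.
Proof. by rewrite inN pV ewp. Qed.

(* The closed neighbourhoods N[u] and N[v]. *)
Definition R1 := [set u; v].
Definition R2 := v |: [set u; w].

Lemma imax_in_split : imax_in V = imax_in (V :\: R1) + imax_in (V :\: R2).
Proof. by rewrite (imax_in_leaf uV Nu) Nu Nv. Qed.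

Lemma adj_R1 x : x \in V -> x \notin R1 -> [exists r in R1, e x r] -> x = w.
Proof.
move=> xV xR1 /exists_adj2[/(nbr_u xV) xv | /(nbr_v xV)[xu | //]].
  by rewrite xv !inE eqxx orbT in xR1.
by rewrite xu !inE eqxx in xR1.
Qed.

Lemma adj_R2 x : x \in V -> x \notin R2 -> [exists r in R2, e x r] ->
  x \in N V w /\ x != v.
Proof.
move=> xV xR2; have xv : x != v by apply: contraNneq xR2 => ->; rewrite !inE eqxx.
case/existsP => r /andP[]; rewrite !inE => /or3P[] /eqP-> exr.
- by case: (nbr_v xV exr) => xe; rewrite xe !inE eqxx ?orbT in xR2.
- by rewrite (nbr_u xV exr) eqxx in xv.
- by rewrite xV e_sym.
Qed.

Lemma imax_in_setD_R1_ge B k : #|B| <= k -> (w \notin B -> nbhd_separated V R1 B w) ->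
  g (#|V| - (2 + k)) <= imax_in (V :\: R1).
Proof.
move=> Bk sep_w; apply: (@imax_in_setD_ge V _ _ u IH) => //; first by rewrite !inE eqxx.
apply: leq_trans (card_le_nnbhd_setD twV isoV _) _.
  by move=> x xV xR1 xB /(adj_R1 xV xR1) xw; rewrite xw in xB *; apply: sep_w.
by rewrite -addnA leq_add2l leq_add ?cards2_le.
Qed.

Lemma imax_in_setD_R2_ge B k : #|B| <= k ->
  (forall x, x \in N V w -> x != v -> x \notin R2 -> x \notin B -> nbhd_separated V R2 B x) ->
  g (#|V| - (3 + k)) <= imax_in (V :\: R2).
Proof.
move=> Bk sep_x; apply: (@imax_in_setD_ge V _ _ u IH) => //; first by rewrite !inE eqxx orbT.
apply: leq_trans (card_le_nnbhd_setD twV isoV _) _.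
  by move=> x xV xR2 xB /(adj_R2 xV xR2)[xNw xv]; apply: sep_x.
by rewrite -addnA leq_add2l leq_add ?cards3_le.
Qed.

Lemma pendant_neq x c : x \in N V w -> x != v -> N V x = [set w; c] -> N V c = [set x] ->
  [/\ c \in V, c != u, c != v & c != w].
Proof.
move=> xN xv Nx Nc; have cV : c \in V by apply: (@N_sub V x); rewrite Nx set22.
split=> //; apply/eqP => cx; move: Nc; rewrite cx.
- by rewrite Nu => /set1_inj vx; rewrite vx eqxx in xv.
- move=> Nvx; have /set1P ux : u \in [set x] by rewrite -Nvx Nv set21.
  have /set1P wx : w \in [set x] by rewrite -Nvx Nv set22.
  by move: uw; rewrite ux wx eqxx.
move=> Nwx; have /set1P vx : v \in [set x] by rewrite -Nwx N_sym // Nv set22.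
by rewrite vx eqxx in xv.
Qed.

Lemma separated_pendant R B x c : N V x = [set w; c] -> N V c = [set x] -> c \notin R ->
  nbhd_separated V R B x.
Proof.
by move=> Nx Nc cR; apply: (@separated_leaf V R B x c) => //; rewrite N_setD in_setD cR Nx set22.
Qed.

Lemma separated_R2_pendant B x : x \in N V w -> x != v -> x != p -> N V x != [set w] ->
  nbhd_separated V R2 B x.
Proof.
move=> xN xv xp; case: (Nw_branches xN xv xp) => [-> | [c [Nx Nc]]]; first by rewrite eqxx.
have [_ cu cv cw] := pendant_neq xN xv Nx Nc.
by move=> _; apply: separated_pendant Nx Nc _; rewrite !inE !negb_or cv cu cw.
Qed.

Lemma imax_in_ge_pendant_on_w x : (forall l, l \in V -> N V l = [set w] -> l = p) ->
  x \in N V w -> x != v -> x != p -> g #|V| <= imax_in V.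
Proof.
move=> no_leaf xN xv xp; rewrite imax_in_split.
apply: leq_trans (g_le_sub2_sub4 #|V|) (leq_add _ _).
  apply: (@imax_in_setD_R1_ge set0 0); rewrite ?cards0 // => _.
  apply: (@separated_two _ _ _ _ x p).
  - rewrite N_setD in_setD xN andbT !inE negb_or xv andbT.
    by apply: contraNneq u_notin_Nw => <-.
  - by rewrite N_setD in_setD p_in_Nw andbT !inE negb_or eq_sym up eq_sym vp.
  - exact: xp.
apply: (@imax_in_setD_R2_ge [set p] 1); rewrite ?cards1 // => y yN yv _ /set1P/eqP yp.
apply: separated_R2_pendant => //; apply: contra_neq yp; exact: no_leaf (N_sub yN).
Qed.

Section WDegreeTwo.

Hypothesis Nw : forall x, x \in N V w -> x = v \/ x = p.

Lemma imax_in_ge_w_deg2_leaf_on_p q : 4 <= #|V| -> q \in V -> N V q = [set p] -> q != w ->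
  g #|V| <= imax_in V.
Proof.
move=> V4 qV Nq qw; rewrite imax_in_split.
apply: leq_trans (g_le_double_sub3 V4) _; rewrite mul2n -addnn leq_add //.
  by apply: (@imax_in_setD_R1_ge [set w] 1); rewrite ?cards1 ?set11.
apply: (@imax_in_setD_R2_ge set0 0); rewrite ?cards0 // => x /Nw[-> | ->]; first by rewrite eqxx.
move=> _ _ _; apply: (@separated_leaf V R2 set0 p q) => //.
have pq : p \in N V q by rewrite Nq set11.
have [qv | qv] := eqVneq q v.
  have /set1P up' : u \in [set p] by rewrite -Nq qv Nv set21.
  by move: up; rewrite up' eqxx.
have [qu | qu] := eqVneq q u.
  by move: pq vp; rewrite qu Nu => /set1P ->; rewrite eqxx.
by rewrite N_setD in_setD N_sym ?pq ?(N_sub pq) // !inE !negb_or qv qu qw.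
Qed.

Lemma imax_in_ge_w_deg2 : (forall q, q \in V -> N V q = [set p] -> q = w) -> g #|V| <= imax_in V.
Proof.
move=> no_leaf_p; rewrite imax_in_split.
apply: leq_trans (g_le_sub2_sub4 #|V|) (leq_add _ _); last first.
  apply: (@imax_in_setD_R2_ge [set p] 1); rewrite ?cards1 // => x /Nw[-> | ->].
    by rewrite eqxx.
  by rewrite set11.
apply: (@imax_in_setD_R1_ge set0 0); rewrite ?cards0 // => _.
have N1w : N (V :\: R1) w = [set p].
  apply/setP => t; rewrite N_setD in_setD inE; apply/andP/eqP => [[tR1 /Nw[tv | //]] | ->].
    by rewrite tv !inE eqxx orbT in tR1.
  by rewrite p_in_Nw !inE negb_or eq_sym up eq_sym vp.
split; first by rewrite N1w; apply/set0Pn; exists p; rewrite set11.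
move=> y yV yR1 _ yw; apply/eqP => Nyw.
case: (boolP [exists r in R1, e y r]) => [/(adj_R1 yV yR1) | yR1'].
  by move/eqP: yw.
by move/eqP: yw; apply; apply: no_leaf_p; rewrite // -(N_setD_nonadj V yR1') Nyw.
Qed.

End WDegreeTwo.

Lemma Np_of_setD_R2 z : N (V :\: R2) p = [set z] -> N V p = [set w; z].
Proof.
move=> N2p; apply/setP => t; rewrite in_set2; apply/idP/orP => [tNp | [] /eqP ->].
- case: (boolP (t \in R2)) => tR2; last first.
    by right; apply/eqP/set1P; rewrite -N2p N_setD in_setD tR2.
  left; apply/eqP; move: tR2; rewrite !inE => /or3P[] /eqP // tE; rewrite tE in tNp.
    by move: p_notin_Nv; rewrite N_sym // tNp.
  by move: p_notin_Nu; rewrite N_sym // tNp.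
- by rewrite N_sym ?p_in_Nw.
- by apply: (subsetP (subsetDl _ R2)); rewrite -N_setD N2p set11.
Qed.

Section LeafOnW.

Variable l : T.
Hypotheses (lV : l \in V) (Nl : N V l = [set w]) (lp : l != p).

Lemma l_in_Nw : l \in N V w.
Proof. by rewrite N_sym // Nl set11. Qed.

Lemma l_neq : [/\ l != u, l != v & l != w].
Proof.
split; apply/eqP => el; move: Nl; rewrite el.
- by rewrite Nu => /set1_inj vw'; move: vw; rewrite vw' eqxx.
- move=> Nvw; have /set1P uw' : u \in [set w] by rewrite -Nvw Nv set21.
  by move: uw; rewrite uw' eqxx.
- by move=> Nww; have := l_in_Nw; rewrite el inN e_irr andbF.
Qed.

Lemma leaf_on_w_unique x : x \in V -> N V x = [set w] -> x = l.
Proof. by move=> xV Nx; apply: twV; rewrite ?Nx ?Nl. Qed.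

Lemma nbr_w_pendant x : x \in N V w -> x != v -> x != p -> x != l ->
  exists c, N V x = [set w; c] /\ N V c = [set x].
Proof.
move=> xN xv xp xl; case: (Nw_branches xN xv xp) => // /(leaf_on_w_unique (N_sub xN)) xl'.
by rewrite xl' eqxx in xl.
Qed.

Lemma imax_in_setD_R1_leaf_ge : g (#|V| - 2) <= imax_in (V :\: R1).
Proof.
have [lu lv _] := l_neq.
apply: (@imax_in_setD_R1_ge set0 0); rewrite ?cards0 // => _.
apply: (@separated_leaf V R1 set0 w l) => //.
by rewrite N_setD in_setD l_in_Nw andbT !inE negb_or lu lv.
Qed.

Lemma separated_R2_other B x : x \in N V w -> x != v -> x != p -> x != l ->
  nbhd_separated V R2 B x.
Proof.
move=> xN xv xp xl; apply: separated_R2_pendant => //.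
by apply: contra_neq xl; apply: leaf_on_w_unique (N_sub xN).
Qed.

Lemma separated_p_R2 :
  (forall z lz, lz \in V -> N V p = [set w; z] -> N V lz = [set z] -> lz = p) ->
  nbhd_separated V R2 [set l] p.
Proof.
move=> no_pendant_p.
have [Np | [z zNp zw]] := @eq_set1_or_other _ (N V p) w (etrans (N_sym wV pV) p_in_Nw).
  by move: lp; rewrite (twV lV pV) ?eqxx // Nl Np.
have zu : z != u by apply: contraNneq p_notin_Nu => <-; rewrite N_sym ?(N_sub zNp).
have zv : z != v by apply: contraNneq p_notin_Nv => <-; rewrite N_sym ?(N_sub zNp).
have zN2 : z \in N (V :\: R2) p by rewrite N_setD in_setD zNp !inE !negb_or zv zu zw.
have [N2p | [z' z'N z'z]] := eq_set1_or_other zN2; last exact: separated_two z'N zN2 z'z.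
split; first by apply/set0Pn; exists z.
move=> y yV yR2 /set1P/eqP yl yp; apply/eqP => N2y.
case: (boolP [exists r in R2, e y r]) => [/(adj_R2 yV yR2)[yN yv] | yR2'].
  have [c [Ny Nc]] := nbr_w_pendant yN yv yp yl.
  have [_ cu cv cw] := pendant_neq yN yv Ny Nc.
  have /set1P cz : c \in [set z].
    by rewrite -N2p -N2y N_setD in_setD Ny set22 !inE !negb_or cv cu cw.
  have /set1P py : p \in [set y] by rewrite -Nc cz N_sym ?(N_sub zNp).
  by rewrite py eqxx in yp.
have Ny : N V y = [set z] by rewrite -(N_setD_nonadj V yR2') N2y.
by move: yp; rewrite (no_pendant_p z y yV (Np_of_setD_R2 N2p) Ny) eqxx.
Qed.

Lemma imax_in_ge_leaf_on_w_plain_p :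
  (forall z lz, lz \in V -> N V p = [set w; z] -> N V lz = [set z] -> lz = p) ->
  g #|V| <= imax_in V.
Proof.
move=> no_pendant_p; rewrite imax_in_split.
apply: leq_trans (g_le_sub2_sub4 #|V|) (leq_add imax_in_setD_R1_leaf_ge _).
apply: (@imax_in_setD_R2_ge [set l] 1); rewrite ?cards1 // => x xN xv _ /set1P/eqP xl.
have [-> | xp] := eqVneq x p; first exact: separated_p_R2.
exact: separated_R2_other.
Qed.

Section TwoPendants.

Variables x c : T.
Hypotheses (xN : x \in N V w) (xv : x != v).
Hypotheses (Nx : N V x = [set w; c]) (Nc : N V c = [set x]).

Definition R3 := R2 :|: [set c; x].

Lemma imax_in_setD_R3_ge : g (#|V| - 7) <= imax_in (V :\: R3).
Proof.
apply: (@imax_in_setD_ge V R3 7 u IH) => //; first by rewrite !inE eqxx !orbT.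
apply: leq_trans (@card_le_nnbhd_setD V R3 [set l; p] twV isoV _) _; last first.
  rewrite -addnA leq_add2l; apply: leq_trans (leq_add (leq_card_setU _ _) (cards2_le l p)) _.
  exact: leq_trans (leq_add (leq_add (cards3_le _ _ _) (cards2_le _ _)) (leqnn 2)) _.
move=> y yV yR3 yB ay.
have yR2 : y \notin R2 by apply: contra yR3 => yR2; rewrite in_setU yR2.
have yc : y != c by apply: contra yR3 => /eqP ->; rewrite !inE eqxx !orbT.
have yx : y != x by apply: contra yR3 => /eqP ->; rewrite !inE eqxx !orbT.
have yl : y != l by apply: contra yB => /eqP ->; rewrite !inE eqxx.
have yp : y != p by apply: contra yB => /eqP ->; rewrite !inE eqxx orbT.
case: (exists_adjU ay) => [/(adj_R2 yV yR2)[yN yv] | /exists_adj2[eyc | eyx]].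
- have [c' [Ny Nc']] := nbr_w_pendant yN yv yp yl.
  have [_ c'u c'v c'w] := pendant_neq yN yv Ny Nc'.
  apply: (separated_pendant _ Ny Nc').
  have c'c : c' != c.
    by apply/eqP => c'c; move/eqP: yx; apply; apply: set1_inj; rewrite -Nc -c'c Nc'.
  have c'x : c' != x.
    apply/eqP => c'x; have /set1P wy : w \in [set y] by rewrite -Nc' c'x Nx set21.
    by move: yR2; rewrite -wy !inE eqxx !orbT.
  by rewrite !inE !negb_or c'u c'v c'w c'c c'x.
- have /set1P yx' : y \in [set x] by rewrite -Nc inN yV e_sym.
  by rewrite yx' eqxx in yx.
- have /set2P[yw | yc'] : y \in [set w; c] by rewrite -Nx inN yV e_sym.
    by move: yR2; rewrite yw !inE eqxx !orbT.
  by rewrite yc' eqxx in yc.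
Qed.

Lemma imax_in_ge_leaf_on_w_two_pendants : g #|V| <= imax_in V.
Proof.
have [cV cu cv cw] := pendant_neq xN xv Nx Nc.
have xu : x != u by apply: contraNneq u_notin_Nw => <-.
have xw : x != w by apply: contraTneq xN => ->; rewrite inN e_irr andbF.
have cW2 : c \in V :\: R2 by rewrite in_setD cV !inE !negb_or cv cu cw.
have N2c : N (V :\: R2) c = [set x].
  by rewrite N_setD Nc; apply/setDidPl; rewrite disjoints1 !inE !negb_or xv xu xw.
have N2x : N (V :\: R2) x = [set c].
  apply/setP => t; rewrite N_setD Nx in_setD !inE.
  have [-> | tc] := eqVneq t c; first by rewrite (negbTE cv) (negbTE cu) (negbTE cw).
  by rewrite orbF; have [-> | tw] := eqVneq t w; rewrite ?eqxx ?orbT ?andbF.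
rewrite imax_in_split (imax_in_leaf cW2 N2c) N2c N2x (setUC [set x]) !setDDl.
apply: leq_trans (g_le_sub2_double_sub7 _) (leq_add imax_in_setD_R1_leaf_ge _).
by rewrite mul2n -addnn leq_add ?imax_in_setD_R3_ge.
Qed.

End TwoPendants.

Section PendantOnP.

Variables z lz : T.
Hypotheses (lzV : lz \in V) (Np : N V p = [set w; z]) (Nlz : N V lz = [set z]).
Hypothesis lzp : lz != p.
Hypothesis Nw : forall x, x \in N V w -> [|| x == v, x == p | x == l].

Lemma z_in_Np : z \in N V p.
Proof. by rewrite Np set22. Qed.

Lemma z_neq : [/\ z != u, z != v, z != w, z != l & z != p].
Proof.
have zV := N_sub z_in_Np; split; apply/eqP => ez.
- by move: p_notin_Nu; rewrite -ez N_sym // z_in_Np.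
- by move: p_notin_Nv; rewrite -ez N_sym // z_in_Np.
- by move/eqP: lp; apply; apply: twV; rewrite // Np Nl ez setUid.
- by have := z_in_Np; rewrite ez N_sym // Nl => /set1P pw; move: wp; rewrite pw eqxx.
- by have := z_in_Np; rewrite ez inN e_irr andbF.
Qed.

Lemma lz_neq : [/\ lz != u, lz != v, lz != w & lz != l].
Proof.
have [zu zv zw zl _] := z_neq.
split; apply/eqP => elz; move: Nlz; rewrite elz.
- by rewrite Nu => /set1_inj vz; rewrite vz eqxx in zv.
- move=> Nvz; have /set1P uz : u \in [set z] by rewrite -Nvz Nv set21.
  have /set1P wz : w \in [set z] by rewrite -Nvz Nv set22.
  by move: uw; rewrite uz wz eqxx.
- move=> Nwz; have /set1P vz : v \in [set z] by rewrite -Nwz N_sym // Nv set22.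
  by rewrite vz eqxx in zv.
- by rewrite Nl => /set1_inj wz; rewrite wz eqxx in zw.
Qed.

Lemma Nw_cases x : x \in V -> e x w -> [|| x == v, x == p | x == l].
Proof. by move=> xV exw; apply: Nw; rewrite inN xV e_sym. Qed.

Definition R4 := R1 :|: [set l; w].

Lemma imax_in_setD_R4_ge : g (#|V| - 5) <= imax_in (V :\: R4).
Proof.
apply: (@imax_in_setD_ge V R4 5 u IH) => //; first by rewrite !inE eqxx.
apply: leq_trans (@card_le_nnbhd_setD V R4 [set p] twV isoV _) _; last first.
  rewrite cards1 -addnA leq_add2l addn1 ltnS.
  exact: leq_trans (leq_card_setU _ _) (leq_add (cards2_le _ _) (cards2_le _ _)).
move=> x xV xR4 /set1P/eqP xp ax; exfalso.
have xR1 : x \notin R1 by apply: contra xR4 => xR1; rewrite in_setU xR1.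
have xl : x != l by apply: contra xR4 => /eqP ->; rewrite !inE eqxx !orbT.
have xw : x != w by apply: contra xR4 => /eqP ->; rewrite !inE eqxx !orbT.
case: (exists_adjU ax) => [/(adj_R1 xV xR1)/eqP | /exists_adj2[exl | /(Nw_cases xV)]].
- by rewrite (negbTE xw).
- have /set1P xw' : x \in [set w] by rewrite -Nl inN xV e_sym.
  by rewrite xw' eqxx in xw.
- by rewrite (negbTE xp) (negbTE xl) !orbF => /eqP xv; rewrite xv !inE eqxx orbT in xR1.
Qed.

Definition R5 := R1 :|: (w |: [set l; p]).

Lemma z_lz_notin_R5 : z \notin R5 /\ lz \notin R5.
Proof.
have [zu zv zw zl zp] := z_neq; have [lzu lzv lzw lzl] := lz_neq.
by rewrite !inE !negb_or zu zv zw zl zp lzu lzv lzw lzl lzp.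
Qed.

Lemma lz_in_N5z : lz \in N (V :\: R5) z.
Proof.
have [_ lzR5] := z_lz_notin_R5.
by rewrite N_setD in_setD lzR5 N_sym ?Nlz ?set11 ?(N_sub z_in_Np).
Qed.

Lemma card_le_nnbhd_R5 : #|V| <= nnbhd (V :\: R5) + 5.
Proof.
apply: leq_trans (@card_le_nnbhd_setD V R5 set0 twV isoV _) _; last first.
  rewrite cards0 addn0 leq_add2l.
  exact: leq_trans (leq_card_setU _ _) (leq_add (cards2_le _ _) (cards3_le _ _ _)).
move=> x xV xR5 _ ax.
have xR1 : x \notin R1 by apply: contra xR5 => xR1; rewrite in_setU xR1.
have xw : x != w by apply: contra xR5 => /eqP ->; rewrite !inE eqxx !orbT.
have xl : x != l by apply: contra xR5 => /eqP ->; rewrite !inE eqxx !orbT.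
have xp : x != p by apply: contra xR5 => /eqP ->; rewrite !inE eqxx !orbT.
case: (exists_adjU ax) => [/(adj_R1 xV xR1)/eqP | /exists_adjU[/exists_adj1 | ]].
- by rewrite (negbTE xw).
- move/(Nw_cases xV); rewrite (negbTE xp) (negbTE xl) !orbF => /eqP xv.
  by rewrite xv !inE eqxx orbT in xR1.
case/exists_adj2 => [exl | exp].
  have /set1P xw' : x \in [set w] by rewrite -Nl inN xV e_sym.
  by rewrite xw' eqxx in xw.
have /set2P[xw' | ->] : x \in [set w; z] by rewrite -Np inN xV e_sym.
  by rewrite xw' eqxx in xw.
exact: separated_leaf lz_in_N5z Nlz.
Qed.

Lemma two_le_nnbhd_R5 : 2 <= nnbhd (V :\: R5).
Proof.
have [zR5 lzR5] := z_lz_notin_R5; have zV := N_sub z_in_Np.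
have zlz : z != lz by apply: contraTneq lz_in_N5z => <-; rewrite inN e_irr andbF.
have <- : #|[set z; lz]| = 2 by rewrite cards2 zlz.
apply: card_le_nnbhd.
- by apply/subsetP => t /set2P[-> | ->]; rewrite in_setD ?zR5 ?lzR5.
- move=> a b /set2P[-> | ->] /set2P[-> | ->] // N5; move: lz_in_N5z.
    by rewrite N5 inN e_irr andbF.
  by rewrite -N5 inN e_irr andbF.
move=> t /set2P[-> | ->]; apply/set0Pn; first by exists lz; exact: lz_in_N5z.
by exists z; rewrite N_setD in_setD zR5 Nlz set11.
Qed.

Lemma imax_in_setD_R5_ge : g (maxn (#|V| - 5) 2) <= imax_in (V :\: R5).
Proof.
apply: leq_trans (IH (@setD_ltn V R5 u uV _)); last by rewrite !inE eqxx.
by apply: g_mono; rewrite geq_max two_le_nnbhd_R5 andbT leq_subLR addnC card_le_nnbhd_R5.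
Qed.

Lemma imax_in_ge_leaf_on_w_pendant_p : g #|V| <= imax_in V.
Proof.
have [lu lv lw] := l_neq.
have lW1 : l \in V :\: R1 by rewrite in_setD lV !inE negb_or lu lv.
have N1l : N (V :\: R1) l = [set w].
  by rewrite N_setD Nl; apply/setDidPl; rewrite disjoints1 !inE negb_or eq_sym uw eq_sym vw.
have N1w : N (V :\: R1) w = [set l; p].
  apply/setP => t; rewrite N_setD in_setD; apply/andP/set2P => [[tR1 /Nw] | [-> | ->]].
  - case/or3P => /eqP tE; [by rewrite tE !inE eqxx orbT in tR1 | by right | by left].
  - by rewrite l_in_Nw !inE negb_or lu lv.
  - by rewrite p_in_Nw !inE negb_or eq_sym up eq_sym vp.
have W2_ge : g (#|V| - 5) <= imax_in (V :\: R2).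
  apply: (@imax_in_setD_R2_ge [set l; p] 2); rewrite ?cards2_le // => x /Nw xN xv _.
  rewrite !inE negb_or => /andP[xl xp].
  by rewrite (negbTE xv) (negbTE xl) (negbTE xp) in xN.
rewrite imax_in_split (imax_in_leaf lW1 N1l) N1l N1w !setDDl.
apply: leq_trans (g_le_double_sub5 _) _.
by rewrite mul2n -addnn addnAC !leq_add ?imax_in_setD_R4_ge ?imax_in_setD_R5_ge.
Qed.

End PendantOnP.

Lemma imax_in_ge_leaf_on_w : g #|V| <= imax_in V.
Proof.
pose pendant_p zl := [&& zl.2 \in V, N V p == [set w; zl.1], N V zl.2 == [set zl.1] & zl.2 != p].
case: (pickP pendant_p) => [[z lz] /and4P[lzV /eqP Np /eqP Nlz lzp] | no_pendant_p].
  case: (pickP [pred x | [&& x \in N V w, x != v, x != p & x != l]]) => [x | no_other].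
    case/and4P => xN xv xp xl; have [c [Nx Nc]] := nbr_w_pendant xN xv xp xl.
    exact: imax_in_ge_leaf_on_w_two_pendants xN xv Nx Nc.
  apply: (imax_in_ge_leaf_on_w_pendant_p lzV Np Nlz lzp) => x xN.
  by move: (no_other x); rewrite /= xN -!negb_or => /negbFE.
apply: imax_in_ge_leaf_on_w_plain_p => z lz lzV Np Nlz; apply/eqP/negPn/negP => lzp.
by move: (no_pendant_p (z, lz)); rewrite /pendant_p /= lzV Np Nlz !eqxx lzp.
Qed.

End LeafOnW.

Lemma imax_in_ge_longest_path_end : 4 <= #|V| -> g #|V| <= imax_in V.
Proof.
move=> V4.
case: (pickP [pred l | [&& l \in V, N V l == [set w] & l != p]]) => [l | no_leaf].
  by case/and3P => lV /eqP Nl lp; apply: imax_in_ge_leaf_on_w lV Nl lp.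
case: (pickP [pred x | [&& x \in N V w, x != v & x != p]]) => [x | no_other].
  case/and3P => xN xv xp; apply: imax_in_ge_pendant_on_w xN xv xp => l lV Nl.
  by apply/eqP/negPn/negP => lp; move: (no_leaf l); rewrite /= lV Nl eqxx lp.
have Nw x : x \in N V w -> x = v \/ x = p.
  by move=> xN; move: (no_other x); rewrite /= xN; case: eqP; case: eqP; auto.
case: (pickP [pred q | [&& q \in V, N V q == [set p] & q != w]]) => [q | no_q].
  by case/and3P => qV /eqP Nq qw; apply: (imax_in_ge_w_deg2_leaf_on_p Nw V4 qV Nq qw).
apply: imax_in_ge_w_deg2 Nw _ => q qV Nq.
by apply/eqP/negPn/negP => qw; move: (no_q q); rewrite /= qV Nq eqxx qw.
Qed.

End LongestPathEnd.

(** * The induction *)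

Lemma imax_in_ge_K2 V a b :
  (forall W, #|W| < #|V| -> g (nnbhd W) <= imax_in W) ->
  twin_free_in V -> no_isolated_in V ->
  a \in V -> N V a = [set b] -> N V b = [set a] -> g #|V| <= imax_in V.
Proof.
move=> IH twV isoV aV Na Nb; rewrite (imax_in_leaf aV Na) Na Nb setUC addnn -mul2n.
apply: leq_trans (g_le_double_sub2 _) _; rewrite leq_mul2l /=.
apply: (imax_in_setD_ge IH aV (set22 b a)).
apply: leq_trans (@card_le_nnbhd_setD V [set b; a] set0 twV isoV _) _; last first.
  by rewrite cards0 addn0 leq_add2l cards2_le.
move=> x xV xR _ /exists_adj2[exb | exa]; exfalso; move: xR.
  have /set1P -> : x \in [set a] by rewrite -Nb inN xV e_sym.
  by rewrite set22.
have /set1P -> : x \in [set b] by rewrite -Na inN xV e_sym.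
by rewrite set21.
Qed.

Lemma imax_in_ge_twin_free V : twin_free_in V -> no_isolated_in V ->
  (forall W, #|W| < #|V| -> g (nnbhd W) <= imax_in W) -> g #|V| <= imax_in V.
Proof.
move=> twV isoV IH; have [V0 | [a aV]] := set_0Vmem V.
  rewrite V0 cards0; apply/card_gt0P; exists set0; rewrite inE; apply/misP.
  by split=> [|x y|x]; rewrite ?sub0set ?inE.
have [b] := set0Pn _ (isoV a aV); rewrite inN => /andP[bV eab].
have [s ls] := exists_longest_spath V; have [s_path max_s] := ls.
have ab : a != b by apply: contraTneq eab => ->; rewrite e_irr.
have ab_path : spath V [:: a; b] by rewrite /spath /= !inE aV bV eab ab.
have := max_s _ ab_path; have := spath_size s_path.
case: s ls s_path {max_s} => [|a0 [|a1 [|a2 [|a3 q]]]] ls s_path // sV _.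
- have /and3P[_ /andP[a0V _] _] := s_path.
  exact: imax_in_ge_K2 IH twV isoV a0V (longest_end ls) (longest_end (longest_spath_rev ls)).
- have /and3P[/and3P[a0s _ _] /and3P[a0V _ /andP[a2V _]] _] := s_path.
  have a02 : a0 = a2 by apply: twV; rewrite // (longest_end ls) (longest_end (longest_spath_rev ls)).
  by move: a0s; rewrite a02 !inE eqxx orbT.
have /and3P[Us /and5P[a0V a1V a2V a3V _] /and4P[_ _ e23 _]] := s_path.
move: Us => /and5P[]; rewrite !inE !negb_or => /and4P[_ a02 a03 _] /and3P[a12 a13 _] /andP[a23 _] _ _.
apply: (@imax_in_ge_longest_path_end V a0 a1 a2 a3) => //.
- exact: longest_end ls.
- exact: longest_second twV ls.
- by move=> x; apply: longest_third twV ls.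
- by apply: leq_trans _ sV.
Qed.

Lemma imax_in_ge_g V : g (nnbhd V) <= imax_in V.
Proof.
move: {2}#|V| (erefl #|V|) => n; elim/ltn_ind: n V => n IHn V nV.
have IH W : #|W| < #|V| -> g (nnbhd W) <= imax_in W.
  by move=> ltWV; apply: (IHn #|W|); rewrite -?nV.
have IH_setD1 z : z \in V -> nnbhd V <= nnbhd (V :\ z) -> imax_in V = imax_in (V :\ z) ->
    g (nnbhd V) <= imax_in V.
  by move=> zV le_nnbhd ->; apply: leq_trans (g_mono le_nnbhd) (IH _ (setD_ltn zV (set11 z))).
pose twins xy := [&& xy.1 \in V, xy.2 \in V, xy.1 != xy.2 & N V xy.1 == N V xy.2].
case: (pickP twins) => [[x y] /and4P[/= xV yV xy /eqP Nxy] | no_twins].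
  exact: IH_setD1 xV (nnbhd_twin xV yV xy Nxy) (imax_in_twin xV yV xy Nxy).
case: (pickP [pred z | (z \in V) && (N V z == set0)]) => [z /andP[zV /eqP Nz] | no_iso].
  exact: IH_setD1 zV (nnbhd_isolated Nz) (imax_in_isolated zV Nz).
apply: leq_trans (g_mono (nnbhd_le_card V)) (imax_in_ge_twin_free _ _ IH).
  move=> x y xV yV Nxy; apply/eqP/negPn/negP => xy.
  by move: (no_twins (x, y)); rewrite /twins /= xV yV xy Nxy eqxx.
by move=> x xV; apply/negP => /eqP Nx; move: (no_iso x); rewrite /= xV Nx eqxx.
Qed.

Lemma imax_in_setT : imax_in [set: T] = imax e.
Proof.
apply: eq_card => S; rewrite !inE; apply/misP/maxsetP => [[_ indS domS] | [indS maxS]].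
  split=> [|B /independentP indB SB]; first exact/independentP.
  apply/eqP; rewrite eqEsubset SB andbT; apply/subsetP => x xB.
  apply/negPn/negP => xS; have [y yS exy] := domS x (in_setT x) xS.
  by move: (indB _ _ xB (subsetP SB _ yS)); rewrite exy.
split=> [||x _ xS]; [exact: subsetT | exact/independentP |].
case: (boolP [exists y in S, e x y]) => [/existsP[y /andP[yS exy]] | no_nbr].
  by exists y.
have /setP/(_ x) : x |: S = S.
  apply: maxS; last exact: subsetUr.
  apply/independentP/independentU1 => [y yS | ]; last exact/independentP.
  by apply: contra no_nbr => exy; apply/existsP; exists y; rewrite yS.
by rewrite !inE eqxx (negbTE xS).
Qed.

Lemma N_setT x : N [set: T] x = nbhd e x.
Proof. by apply/setP => y; rewrite !inE. Qed.

Lemma nnbhd_setT : twin_free e -> #|T|.-1 <= nnbhd [set: T].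
Proof.
move=> twT; rewrite /nnbhd; set C := [set N _ x | x in _].
have <- : #|C| = #|T|.
  rewrite card_in_imset ?cardsT // => x y _ _; rewrite !N_setT => Nxy.
  by apply/eqP/negPn/negP => /twT; rewrite Nxy eqxx.
by rewrite (cardsD1 set0 C); case: (set0 \in C); rewrite ?add1n ?add0n ?leq_pred.
Qed.

End InducedSubforest.

Theorem corollary4p8 (T : finType) (e : rel T) :
  is_forest e -> twin_free e -> 2 <= #|T| -> f #|T|.-1 <= imax e.
Proof.
move=> [e_sym [e_irr e_acyc]] twT _.
rewrite -(imax_in_setT e_sym e_irr); apply: leq_trans (f_le_g _) _.
by apply: leq_trans (g_mono (nnbhd_setT twT)) _; apply: imax_in_ge_g.
Qed.
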